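(* Let $V_1,V_2,V_3,Y,Z\in\mathbb{R}^3$ with $\|Y\|=\|Z\|$ and $Y,Z\in\operatorname{span}^+(V_1,V_2,V_3)$. Then at least one of the inequalities $\langle V_1,Y\rangle>\langle V_1,Z\rangle$, $\langle V_2,Y\rangle>\langle V_2,Z\rangle$, $\langle V_3,Y\rangle>\langle V_3,Z\rangle$ fails.
   Context: $\operatorname{span}^+(V_1,V_2,V_3)=\{\lambda_1V_1+\lambda_2V_2+\lambda_3V_3:\lambda_1,\lambda_2,\lambda_3>0\}$. *)

From mathcomp Require Import all_boot all_order all_algebra.
From mathcomp Require Import reals.
Set Implicit Arguments. Unset Strict Implicit. Unset Printing Implicit Defensive.
Import Order.TTheory GRing.Theory Num.Theory.
Local Open Scope ring_scope.

Definition dot3 (R : realType) (u v : 'rV[R]_3) : R := \sum_(i < 3) u 0 i * v 0 i.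

Definition enorm3 (R : realType) (u : 'rV[R]_3) : R := Num.sqrt (dot3 u u).

Definition span_pos (R : realType) (V1 V2 V3 : 'rV[R]_3) : 'rV[R]_3 -> Prop :=
  fun X => exists l1 l2 l3 : R, [/\ 0 < l1, 0 < l2, 0 < l3 &
                                   X = l1 *: V1 + l2 *: V2 + l3 *: V3].

(* If [Y - Z] had positive inner product with each [V_i], it would have positive
   inner product with every vector of [span^+(V_1,V_2,V_3)], in particular with
   [Y] and with [Z]; adding the two gives [|Y|^2 - |Z|^2 = <Y + Z, Y - Z> > 0]. *)
From mathcomp Require Import all_boot all_order all_algebra.
From mathcomp Require Import reals.
From mathcomp Require Import lra.

Set Implicit Arguments.
Unset Strict Implicit.
Unset Printing Implicit Defensive.
Import Order.TTheory GRing.Theory Num.Theory.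
Local Open Scope ring_scope.

Section Dot3.
Context {R : realType}.
Implicit Types (a : R) (u v w : 'rV[R]_3).

Lemma dot3C u v : dot3 u v = dot3 v u.
Proof. by apply: eq_bigr => i _; rewrite mulrC. Qed.

Lemma dot3Dl u v w : dot3 (u + v) w = dot3 u w + dot3 v w.
Proof. by rewrite /dot3 -big_split; apply: eq_bigr => i _; rewrite mxE mulrDl. Qed.

Lemma dot3Zl a u w : dot3 (a *: u) w = a * dot3 u w.
Proof. by rewrite /dot3 mulr_sumr; apply: eq_bigr => i _; rewrite mxE mulrA. Qed.

Lemma dot3Br u v w : dot3 u (v - w) = dot3 u v - dot3 u w.
Proof.
by rewrite /dot3 -sumrB; apply: eq_bigr => i _; rewrite !mxE mulrBr.
Qed.

Lemma dot3_ge0 u : 0 <= dot3 u u.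
Proof. by apply: sumr_ge0 => i _; rewrite -expr2 sqr_ge0. Qed.

Lemma sqr_enorm3 u : enorm3 u ^+ 2 = dot3 u u.
Proof. exact/sqr_sqrtr/dot3_ge0. Qed.

Lemma dot3_span_pos_gt0 (V1 V2 V3 W D : 'rV[R]_3) :
  span_pos V1 V2 V3 W ->
  0 < dot3 V1 D -> 0 < dot3 V2 D -> 0 < dot3 V3 D -> 0 < dot3 W D.
Proof.
move=> [l1 [l2 [l3 [l1_gt0 l2_gt0 l3_gt0 ->]]]] D1 D2 D3.
by rewrite !dot3Dl !dot3Zl !addr_gt0 // mulr_gt0.
Qed.

End Dot3.

Theorem lemma5p3 (R : realType) (V1 V2 V3 Y Z : 'rV[R]_3) :
  enorm3 Y = enorm3 Z ->
  span_pos V1 V2 V3 Y -> span_pos V1 V2 V3 Z ->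
  ~ [/\ dot3 V1 Y > dot3 V1 Z, dot3 V2 Y > dot3 V2 Z & dot3 V3 Y > dot3 V3 Z].
Proof.
move=> normYZ Ypos Zpos [lt1 lt2 lt3].
have D_gt0 V : dot3 V Z < dot3 V Y -> 0 < dot3 V (Y - Z).
  by rewrite dot3Br subr_gt0.
have YD_gt0 := dot3_span_pos_gt0 Ypos (D_gt0 _ lt1) (D_gt0 _ lt2) (D_gt0 _ lt3).
have ZD_gt0 := dot3_span_pos_gt0 Zpos (D_gt0 _ lt1) (D_gt0 _ lt2) (D_gt0 _ lt3).
have dotYY : dot3 Y Y = dot3 Z Z by rewrite -!sqr_enorm3 normYZ.
move: YD_gt0 ZD_gt0; rewrite !dot3Br (dot3C Z Y) dotYY.
lra.
Qed.
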